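(* Fix $\vartheta_1\in(0,\pi/2)$ and an integer $k\ge0$. Let $\eta_k$ be the unique solution of $\tan\eta=\eta$ in $k\pi\le\eta<k\pi+\pi/2$, and set $\eta_k'=\eta_k-k\pi$. (1) If $\vartheta_1<\eta_k'$, then on $I_k$ the function $\Phi$ decreases from $\Phi(\vartheta_1+k\pi)=k\pi$ to $\Phi(\eta_k)\ge0$ and then increases to $\Phi((k+1)\pi-\vartheta_1)=(k+1)\pi$. (2) If $\vartheta_1\ge\eta_k'$, then $\Phi$ increases on $I_k$ from $\Phi(\vartheta_1+k\pi)=k\pi$ to $\Phi((k+1)\pi-\vartheta_1)=(k+1)\pi$.
   Context: For integers $k\ge0$ let $I_k=[\vartheta_1+k\pi,(k+1)\pi-\vartheta_1]$. For $\eta\in I_k$ set $\gamma(\eta)=\sqrt{1-\sin^2\vartheta_1/\sin^2\eta}$ and $$\Phi(\eta)=-\eta\,\gamma(\eta)+k\pi+\arccos\Big(\frac{\cos(\eta-k\pi)}{\cos\vartheta_1}\Big),\qquad\arccos\in[0,\pi].$$ *)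

From Stdlib Require Import Reals Lra.
Open Scope R_scope.

Definition gam (theta1 eta : R) : R :=
  sqrt (1 - (sin theta1)^2 / (sin eta)^2).

Definition Phi (theta1 : R) (k : nat) (eta : R) : R :=
  - eta * gam theta1 eta + INR k * PI
  + acos (cos (eta - INR k * PI) / cos theta1).

Definition Ik (theta1 : R) (k : nat) (eta : R) : Prop :=
  theta1 + INR k * PI <= eta <= (INR k + 1) * PI - theta1.

(* Substituting u = eta - k PI and K = k PI turns Phi into
     Phi0 u = - (u + K) gam u + K + acos (cos u / cos theta1)   on [theta1, PI - theta1],
   whose derivative is  sin theta1 ^ 2 / (sin u ^ 2 gam u) * (1 - (u + K) cot u).
   As tan u - u increases on [0, PI/2) and equals K at u_k = eta_k - k PI, the bracket is
   negative before u_k and positive after it.  The endpoint values follow from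
   gam theta1 = gam (PI - theta1) = 0. *)

From Stdlib Require Import Reals Lra Psatz.
From Coquelicot Require Import Coquelicot.
Open Scope R_scope.

Lemma strict_incr_of_derive_pos (f f' : R -> R) (a b : R) :
  (forall x, a < x < b -> derivable_pt_lim f x (f' x)) ->
  (forall x, a < x < b -> 0 < f' x) ->
  (forall x, a <= x <= b -> continuity_pt f x) ->
  forall x y, a <= x -> x < y -> y <= b -> f x < f y.
Proof.
  intros Hder Hpos Hcont x y Hx Hxy Hy.
  assert (Hf : forall c, x < c < y -> derivable_pt f c).
  { intros c Hc; exists (f' c); apply Hder; lra. }
  assert (Hid : forall c, x < c < y -> derivable_pt id c).
  { intros; apply derivable_pt_id. }
  destruct (MVT f id x y Hf Hid Hxy) as [c [Hc Hmvt]].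
  - intros; apply Hcont; lra.
  - intros; apply derivable_continuous_pt, derivable_pt_id.
  - rewrite (derive_pt_eq_0 id c 1 (Hid c Hc)) in Hmvt by apply derivable_pt_lim_id.
    rewrite (derive_pt_eq_0 f c (f' c) (Hf c Hc)) in Hmvt by (apply Hder; lra).
    unfold id in Hmvt. assert (0 < f' c) by (apply Hpos; lra). nra.
Qed.

Lemma continuous_acos_pos x : 0 < x -> continuous acos x.
Proof.
  intros Hx. apply continuity_pt_filterlim.
  apply (continuity_pt_locally_ext (fun y => atan (sqrt (1 - y²) / y)) acos x x Hx).
  { intros y Hy. unfold Rdist in Hy. apply Rabs_def2 in Hy.
    rewrite acos_atan; [reflexivity | lra]. }
  apply continuity_pt_filterlim.
  apply (continuous_atan_comp (fun y => sqrt (1 - y²) / y)).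
  apply (continuous_mult (K:=R_AbsRing)).
  - apply continuous_sqrt_comp, (continuous_plus (V:=R_NormedModule)).
    + apply continuous_const.
    + apply (continuous_opp (V:=R_NormedModule)), (continuous_mult (K:=R_AbsRing));
        apply continuous_id.
  - apply continuous_Rinv; lra.
Qed.

(* Stdlib's [acos] is total, constant outside [-1, 1]. *)
Lemma continuous_acos x : continuous acos x.
Proof.
  destruct (Rtotal_order x 0) as [Hneg | [H0 | Hpos]].
  - apply continuous_ext_loc with (fun y => PI + - acos (- y)).
    { apply filter_forall. intros y. simpl.
      rewrite <- (Ropp_involutive y) at 2. rewrite (acos_opp (- y)). ring. }
    apply (continuous_plus (V:=R_NormedModule)); [apply continuous_const|].
    apply (continuous_opp (V:=R_NormedModule)).
    apply (continuous_comp (fun y => - y) acos).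
    + apply (continuous_opp (V:=R_NormedModule)), continuous_id.
    + apply continuous_acos_pos; lra.
  - apply continuity_pt_filterlim, derivable_continuous_pt, derivable_pt_acos; lra.
  - apply continuous_acos_pos; exact Hpos.
Qed.

Lemma sin_plus_INR_PI k x : sin (x + INR k * PI) = (-1) ^ k * sin x.
Proof.
  induction k as [|k IH].
  - simpl. rewrite Rmult_0_l, Rplus_0_r. ring.
  - rewrite S_INR. replace (x + (INR k + 1) * PI) with (x + INR k * PI + PI) by ring.
    rewrite neg_sin, IH. simpl. ring.
Qed.

Lemma cos_plus_INR_PI k x : cos (x + INR k * PI) = (-1) ^ k * cos x.
Proof.
  induction k as [|k IH].
  - simpl. rewrite Rmult_0_l, Rplus_0_r. ring.
  - rewrite S_INR. replace (x + (INR k + 1) * PI) with (x + INR k * PI + PI) by ring.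
    rewrite neg_cos, IH. simpl. ring.
Qed.

Lemma sin_plus_INR_PI_sqr k x : sin (x + INR k * PI) ^ 2 = sin x ^ 2.
Proof.
  rewrite sin_plus_INR_PI, Rpow_mult_distr, <- pow_mult, Nat.mul_comm, pow_mult.
  replace ((-1) ^ 2) with 1 by ring. rewrite pow1. ring.
Qed.

Lemma tan_plus_INR_PI k x : cos x <> 0 -> tan (x + INR k * PI) = tan x.
Proof.
  intros Hc. unfold tan. rewrite sin_plus_INR_PI, cos_plus_INR_PI.
  field. split; [exact Hc | apply pow_nonzero; lra].
Qed.

Lemma tan_sub_id_strict_incr x y : 0 <= x -> x < y -> y < PI / 2 -> tan x - x < tan y - y.
Proof.
  intros Hx Hxy Hy.
  apply (strict_incr_of_derive_pos (fun u => tan u - u) (fun u => tan u ^ 2) x y); try lra.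
  - intros u Hu. assert (0 < cos u) by (apply cos_gt_0; lra).
    apply is_derive_Reals. unfold tan. auto_derive; [lra | field; lra].
  - intros u Hu. assert (0 < tan u) by (apply tan_gt_0; lra). nra.
  - intros u Hu. assert (0 < cos u) by (apply cos_gt_0; lra).
    apply continuity_pt_filterlim, (continuous_plus (V:=R_NormedModule)).
    + apply continuous_tan; lra.
    + apply (continuous_opp (V:=R_NormedModule)), continuous_id.
Qed.

Lemma one_sub_cot_pos K uk u : 0 <= K -> 0 <= uk -> tan uk = uk + K -> uk < u < PI ->
  0 < 1 - (u + K) * cos u / sin u.
Proof.
  intros HK Huk Htan Hu.
  assert (Hs : 0 < sin u) by (apply sin_gt_0; lra).
  replace (1 - (u + K) * cos u / sin u) with ((sin u - (u + K) * cos u) / sin u)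
    by (field; lra).
  apply Rdiv_lt_0_compat; [|exact Hs].
  destruct (Rlt_le_dec u (PI / 2)) as [Hl | Hl].
  - assert (Hc : 0 < cos u) by (apply cos_gt_0; lra).
    assert (Htanu : tan u * cos u = sin u) by (unfold tan; field; lra).
    pose proof (tan_sub_id_strict_incr uk u Huk (proj1 Hu) Hl). nra.
  - assert (cos u <= 0) by (apply cos_le_0; lra). nra.
Qed.

Lemma one_sub_cot_neg K uk u : uk < PI / 2 -> tan uk = uk + K -> 0 < u < uk ->
  1 - (u + K) * cos u / sin u < 0.
Proof.
  intros Huk Htan Hu. pose proof PI_RGT_0.
  assert (Hs : 0 < sin u) by (apply sin_gt_0; lra).
  assert (Hc : 0 < cos u) by (apply cos_gt_0; lra).
  assert (Htanu : tan u * cos u = sin u) by (unfold tan; field; lra).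
  replace (1 - (u + K) * cos u / sin u) with ((sin u - (u + K) * cos u) / sin u)
    by (field; lra).
  apply Rdiv_neg_pos; [|exact Hs].
  pose proof (tan_sub_id_strict_incr u uk ltac:(lra) (proj2 Hu) Huk). nra.
Qed.

Definition Phi0 (t1 K u : R) : R := - (u + K) * gam t1 u + K + acos (cos u / cos t1).

Lemma Phi_eq_Phi0 t1 k eta : Phi t1 k eta = Phi0 t1 (INR k * PI) (eta - INR k * PI).
Proof.
  unfold Phi, Phi0, gam.
  rewrite <- (sin_plus_INR_PI_sqr k (eta - INR k * PI)).
  replace (eta - INR k * PI + INR k * PI) with eta by ring. reflexivity.
Qed.

Lemma continuous_Phi0 t1 K u : sin u <> 0 -> continuous (Phi0 t1 K) u.
Proof.
  intros Hs. unfold Phi0, gam.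
  apply (continuous_plus (V:=R_NormedModule));
    [apply (continuous_plus (V:=R_NormedModule)); [|apply continuous_const]|].
  - apply (continuous_mult (K:=R_AbsRing)).
    + apply (ex_derive_continuous (K:=R_AbsRing) (V:=R_NormedModule)). auto_derive. trivial.
    + apply continuous_sqrt_comp, (ex_derive_continuous (K:=R_AbsRing) (V:=R_NormedModule)).
      auto_derive. rewrite Rmult_1_r. now apply Rmult_integral_contrapositive_currified.
  - apply (continuous_comp (fun y => cos y / cos t1) acos); [|apply continuous_acos].
    apply (continuous_mult (K:=R_AbsRing)); [apply continuous_cos | apply continuous_const].
Qed.

Section ReducedInterval.

Variable t1 : R.
Hypothesis Ht1 : 0 < t1 < PI / 2.

Lemma cos_t1_bounds : 0 < cos t1 < 1.
Proof.
  split; [apply cos_gt_0; lra|].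
  rewrite <- cos_0. apply cos_decreasing_1; pose proof PI_RGT_0; lra.
Qed.

Lemma sin_pos_reduced u : t1 <= u <= PI - t1 -> 0 < sin u.
Proof. intros Hu. apply sin_gt_0; lra. Qed.

Lemma abs_cos_lt_cos_t1 u : t1 < u < PI - t1 -> - cos t1 < cos u < cos t1.
Proof.
  intros Hu. pose proof PI_RGT_0. split.
  - rewrite <- Rtrigo_facts.cos_pi_minus. apply cos_decreasing_1; lra.
  - apply cos_decreasing_1; lra.
Qed.

Lemma sin_t1_sqr_div_lt_1 u : t1 < u < PI - t1 -> sin t1 ^ 2 / sin u ^ 2 < 1.
Proof.
  intros Hu. pose proof (abs_cos_lt_cos_t1 u Hu). pose proof cos_t1_bounds.
  pose proof (sin2_cos2 u). pose proof (sin2_cos2 t1). unfold Rsqr in *.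
  assert (0 < sin u) by (apply sin_pos_reduced; lra).
  apply (proj1 (Rdiv_lt_1 (sin t1 ^ 2) (sin u ^ 2) ltac:(nra))). nra.
Qed.

Lemma gam_sqr u : t1 < u < PI - t1 -> gam t1 u ^ 2 = 1 - sin t1 ^ 2 / sin u ^ 2.
Proof.
  intros Hu. pose proof (sin_t1_sqr_div_lt_1 u Hu).
  unfold gam. rewrite <- Rsqr_pow2, Rsqr_sqrt; lra.
Qed.

Lemma gam_pos u : t1 < u < PI - t1 -> 0 < gam t1 u.
Proof.
  intros Hu. pose proof (sin_t1_sqr_div_lt_1 u Hu). apply sqrt_lt_R0; lra.
Qed.

Lemma gam_t1 : gam t1 t1 = 0.
Proof.
  assert (0 < sin t1) by (apply sin_pos_reduced; pose proof PI_RGT_0; lra).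
  unfold gam. replace (1 - sin t1 ^ 2 / sin t1 ^ 2) with 0 by (field; lra).
  apply sqrt_0.
Qed.

Lemma sqrt_1_sub_cos_ratio_sqr u : t1 < u < PI - t1 ->
  sqrt (1 - (cos u / cos t1)²) = sin u * gam t1 u / cos t1.
Proof.
  intros Hu. pose proof cos_t1_bounds. pose proof (gam_pos u Hu).
  pose proof (sin_pos_reduced u ltac:(lra)). pose proof (gam_sqr u Hu) as Hg.
  pose proof (sin2_cos2 u). pose proof (sin2_cos2 t1).
  apply Rsqr_inj.
  - apply sqrt_pos.
  - apply Rlt_le, Rdiv_lt_0_compat; [apply Rmult_lt_0_compat|]; lra.
  - rewrite Rsqr_sqrt.
    + unfold Rsqr in *.
      replace (sin u * gam t1 u / cos t1 * (sin u * gam t1 u / cos t1))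
        with (sin u ^ 2 * gam t1 u ^ 2 / cos t1 ^ 2) by (field; lra).
      rewrite Hg. field_simplify; [f_equal; nra | split; lra | lra].
    + pose proof (abs_cos_lt_cos_t1 u Hu). unfold Rsqr.
      replace (1 - cos u / cos t1 * (cos u / cos t1))
        with ((cos t1 * cos t1 - cos u * cos u) / (cos t1 * cos t1)) by (field; lra).
      apply Rlt_le, Rdiv_lt_0_compat; nra.
Qed.

Definition dPhi0 (K u : R) : R :=
  sin t1 ^ 2 / (sin u ^ 2 * gam t1 u) * (1 - (u + K) * cos u / sin u).

Lemma derivable_pt_lim_Phi0 K u : t1 < u < PI - t1 ->
  derivable_pt_lim (Phi0 t1 K) u (dPhi0 K u).
Proof.
  intros Hu. pose proof cos_t1_bounds. pose proof (abs_cos_lt_cos_t1 u Hu).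
  pose proof (sin_pos_reduced u ltac:(lra)). pose proof (gam_pos u Hu).
  pose proof (gam_sqr u Hu) as Hg. pose proof (sin_t1_sqr_div_lt_1 u Hu).
  assert (Hx : -1 < cos u / cos t1 < 1).
  { split; [apply (Rmult_lt_reg_r (cos t1)) | apply (Rmult_lt_reg_r (cos t1))];
      field_simplify; lra. }
  assert (Hlin : is_derive (fun v => - (v + K) * gam t1 v + K) u
                   (- gam t1 u - (u + K) * (sin t1 ^ 2 * cos u / (sin u ^ 3 * gam t1 u)))).
  { (* the radicand of [gam] as [auto_derive] normalizes it *)
    assert (Harg : 1 + - (sin t1 * (sin t1 * 1) * / (sin u * (sin u * 1)))
                  = 1 - sin t1 ^ 2 / sin u ^ 2) by (field; lra).
    unfold gam. auto_derive; rewrite Harg.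
    - repeat split; try lra. nra.
    - fold (gam t1 u). field. lra. }
  assert (Hacos : is_derive (fun v => acos (cos v / cos t1)) u
                    (- sin u / cos t1 * (-1 / sqrt (1 - (cos u / cos t1)²)))).
  { apply (is_derive_comp acos (fun v => cos v / cos t1)).
    - apply is_derive_Reals, (derive_pt_eq_1 acos _ _ (derivable_pt_acos _ Hx)).
      apply derive_pt_acos.
    - auto_derive; [lra | field; lra]. }
  apply is_derive_Reals. unfold Phi0.
  replace (dPhi0 K u) with (plus
    (- gam t1 u - (u + K) * (sin t1 ^ 2 * cos u / (sin u ^ 3 * gam t1 u)))
    (- sin u / cos t1 * (-1 / sqrt (1 - (cos u / cos t1)²)))).
  - exact (is_derive_plus _ _ _ _ _ Hlin Hacos).
  - unfold plus, dPhi0; simpl. rewrite (sqrt_1_sub_cos_ratio_sqr u Hu).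
    replace (- gam t1 u) with (- gam t1 u ^ 2 / gam t1 u) by (field; lra).
    rewrite Hg. field. lra.
Qed.

Lemma dPhi0_factor_pos u : t1 < u < PI - t1 -> 0 < sin t1 ^ 2 / (sin u ^ 2 * gam t1 u).
Proof.
  intros Hu. pose proof (sin_pos_reduced u ltac:(lra)). pose proof (gam_pos u Hu).
  assert (0 < sin t1) by (apply sin_gt_0; lra).
  apply Rdiv_lt_0_compat; [|apply Rmult_lt_0_compat]; nra.
Qed.

Lemma continuity_pt_Phi0 K u : t1 <= u <= PI - t1 -> continuity_pt (Phi0 t1 K) u.
Proof.
  intros Hu. apply continuity_pt_filterlim, continuous_Phi0.
  pose proof (sin_pos_reduced u Hu). lra.
Qed.

Lemma Phi0_t1 K : Phi0 t1 K t1 = K.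
Proof.
  pose proof cos_t1_bounds. unfold Phi0. rewrite gam_t1.
  replace (cos t1 / cos t1) with 1 by (field; lra). rewrite acos_1. ring.
Qed.

Lemma Phi0_PI_sub_t1 K : Phi0 t1 K (PI - t1) = K + PI.
Proof.
  pose proof cos_t1_bounds. unfold Phi0.
  replace (gam t1 (PI - t1)) with (gam t1 t1) by (unfold gam; rewrite sin_PI_x; reflexivity).
  rewrite gam_t1, Rtrigo_facts.cos_pi_minus.
  replace (- cos t1 / cos t1) with (- (1)) by (field; lra). rewrite acos_opp, acos_1. ring.
Qed.

Section Root.

Variables K uk : R.
Hypothesis HK : 0 <= K.
Hypothesis Huk : 0 <= uk < PI / 2.
Hypothesis Htan_uk : tan uk = uk + K.

Lemma Phi0_strict_decr x y : t1 <= x -> x < y -> y <= uk -> Phi0 t1 K y < Phi0 t1 K x.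
Proof.
  intros Hx Hxy Hy.
  enough (- Phi0 t1 K x < - Phi0 t1 K y) by lra.
  apply (strict_incr_of_derive_pos (fun u => - Phi0 t1 K u) (fun u => - dPhi0 K u) t1 uk);
    try lra.
  - intros u Hu. apply derivable_pt_lim_opp, derivable_pt_lim_Phi0. lra.
  - intros u Hu. unfold dPhi0.
    pose proof (dPhi0_factor_pos u ltac:(lra)).
    pose proof (one_sub_cot_neg K uk u (proj2 Huk) Htan_uk ltac:(lra)). nra.
  - intros u Hu. apply continuity_pt_opp, continuity_pt_Phi0. lra.
Qed.

Lemma Phi0_strict_incr x y : uk <= x -> t1 <= x -> x < y -> y <= PI - t1 ->
  Phi0 t1 K x < Phi0 t1 K y.
Proof.
  intros Hux Hx Hxy Hy.
  apply (strict_incr_of_derive_pos (Phi0 t1 K) (dPhi0 K) x (PI - t1)); try lra.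
  - intros u Hu. apply derivable_pt_lim_Phi0. lra.
  - intros u Hu. unfold dPhi0.
    pose proof (dPhi0_factor_pos u ltac:(lra)).
    pose proof (one_sub_cot_pos K uk u HK (proj1 Huk) Htan_uk ltac:(lra)). nra.
  - intros u Hu. apply continuity_pt_Phi0. lra.
Qed.

(* With [v = acos (cos uk / cos t1) <= uk] one has [tan v = tan uk * gam t1 uk], so
   [Phi0 t1 K uk = K - (tan v - v) >= K - (tan uk - uk) = 0]. *)
Lemma Phi0_root_nonneg : t1 < uk -> 0 <= Phi0 t1 K uk.
Proof.
  intros Hlt. pose proof PI_RGT_0.
  assert (Hu : t1 < uk < PI - t1) by lra.
  pose proof cos_t1_bounds. pose proof (abs_cos_lt_cos_t1 uk Hu).
  assert (Hcuk : 0 < cos uk) by (apply cos_gt_0; lra).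
  set (x := cos uk / cos t1).
  assert (Hx : cos uk < x < 1).
  { unfold x. split; apply (Rmult_lt_reg_r (cos t1)); try lra; field_simplify; nra. }
  set (v := acos x).
  assert (Hv : 0 <= v <= uk).
  { pose proof (acos_bound x) as Hb. fold v in Hb. split; [lra|].
    destruct (Rle_dec v uk) as [Hle | Hgt]; [exact Hle|].
    assert (cos v < cos uk) by (apply cos_decreasing_1; lra).
    unfold v in *. rewrite cos_acos in *; lra. }
  assert (Htan_v : tan v = (uk + K) * gam t1 uk).
  { unfold v. rewrite tan_acos by lra. unfold x at 1.
    rewrite (sqrt_1_sub_cos_ratio_sqr uk Hu), <- Htan_uk. unfold x, tan. field. lra. }
  assert (tan v - v <= tan uk - uk).
  { destruct (Req_dec v uk) as [Heq | Hne]; [rewrite Heq; lra|].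
    left. apply tan_sub_id_strict_incr; lra. }
  unfold Phi0. fold x v. nra.
Qed.

End Root.

End ReducedInterval.

Theorem lemma5p14 (theta1 : R) (k : nat) (eta_k : R) :
  0 < theta1 < PI / 2 ->
  INR k * PI <= eta_k < INR k * PI + PI / 2 ->
  tan eta_k = eta_k ->
  (forall x, INR k * PI <= x < INR k * PI + PI / 2 -> tan x = x -> x = eta_k) ->
  Phi theta1 k (theta1 + INR k * PI) = INR k * PI /\
  Phi theta1 k ((INR k + 1) * PI - theta1) = (INR k + 1) * PI /\
  (theta1 < eta_k - INR k * PI ->
     (forall x y, theta1 + INR k * PI <= x -> x < y -> y <= eta_k ->
        Phi theta1 k y < Phi theta1 k x) /\
     0 <= Phi theta1 k eta_k /\
     (forall x y, eta_k <= x -> x < y -> y <= (INR k + 1) * PI - theta1 ->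
        Phi theta1 k x < Phi theta1 k y)) /\
  (eta_k - INR k * PI <= theta1 ->
     forall x y, Ik theta1 k x -> Ik theta1 k y -> x < y ->
        Phi theta1 k x < Phi theta1 k y).
Proof.
  intros Ht1 Heta Htan _. pose proof PI_RGT_0. unfold Ik.
  replace ((INR k + 1) * PI) with (INR k * PI + PI) by ring.
  assert (HK : 0 <= INR k * PI) by (apply Rmult_le_pos; [apply pos_INR | lra]).
  set (K := INR k * PI) in *. set (uk := eta_k - K).
  assert (Huk : 0 <= uk < PI / 2) by (unfold uk; lra).
  assert (Htan_uk : tan uk = uk + K).
  { unfold K. rewrite <- (tan_plus_INR_PI k uk) by (apply Rgt_not_eq, cos_gt_0; lra).
    unfold uk, K. replace (eta_k - INR k * PI + INR k * PI) with eta_k by ring.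
    rewrite Htan. ring. }
  split; [|split; [|split]]; intros; rewrite ?Phi_eq_Phi0; fold K.
  - replace (theta1 + K - K) with theta1 by ring. apply Phi0_t1, Ht1.
  - replace (K + PI - theta1 - K) with (PI - theta1) by ring. apply Phi0_PI_sub_t1, Ht1.
  - split; [|split]; intros; rewrite ?Phi_eq_Phi0; fold K.
    + apply (Phi0_strict_decr theta1 Ht1 K uk); unfold uk in *; lra.
    + apply (Phi0_root_nonneg theta1 Ht1 K uk); unfold uk in *; lra.
    + apply (Phi0_strict_incr theta1 Ht1 K uk); unfold uk in *; lra.
  - apply (Phi0_strict_incr theta1 Ht1 K uk); unfold uk in *; lra.
Qed.
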